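(* Let $n\in\mathbb{N}$, $n\geq 2$, let $l\in(0,\frac{2}{n})$ and let $\alpha$ satisfy $\frac{2}{n}\leq\alpha<1+\frac{1}{n}-\frac{l}{2}$. Let $\theta$ with $1<\theta<\frac{n}{n-2}$ and $\mu>\frac{n}{2}$ be such that $$\frac{l(2\mu-1)}{4\mu-n}<\frac{n(\theta+1-2\alpha\theta)+2\theta}{2n\theta+n^2-n^2\theta}.$$ Then there is $q_r\in[1,\infty)$ such that for all $q>q_r$, $$-\frac{2l\big(nq+\mu(4+n^2-2n(2+q))\big)}{n(4\mu-n)}<\frac{q\big(2n(\theta+1-2\alpha\theta)+4\theta\big)+2n\theta(\alpha-1)(n-2)}{2n\theta+n^2-n^2\theta}.$$
   Context: For $n=2$ the condition $1<\theta<\frac{n}{n-2}$ is understood as $\theta>1$. *)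

From mathcomp Require Import all_boot all_order all_algebra.

From mathcomp Require Import all_boot all_order all_algebra.
From mathcomp Require Import ring lra.
Import Order.TTheory GRing.Theory Num.Theory.
Local Open Scope ring_scope.

(* Both sides are affine in q.  The left slope is 2 l (2 mu - 1) / (4 mu - n)
   and the right slope is 2 (n (theta + 1 - 2 alpha theta) + 2 theta) / D with
   D = 2 n theta + n^2 - n^2 theta = n (2 theta + n - n theta), so the key
   hypothesis says precisely that the right slope is the larger one, and the
   inequality holds for all large q.  The only other input is positivity of the
   denominators 4 mu - n and D, which follows from mu > n/2 and
   theta < n/(n-2). *)

Lemma affine_lt_eventually (R : realFieldType) (a b c d : R) :
  a < b -> exists qr : R, 1 <= qr /\ forall q, qr < q -> q * a + c < q * b + d.
Proof.
move=> ab; set s := b - a; have s_gt0 : 0 < s by rewrite subr_gt0.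
exists (1 + `|c - d| / s); split=> [|q q_large].
  have : 0 <= `|c - d| / s by rewrite divr_ge0 // ltW.
  lra.
have : `|c - d| < q * s by rewrite -ltr_pdivrMr //; lra.
have := ler_norm (c - d).
rewrite /s; lra.
Qed.

Lemma theta_denom_gt0 (R : realFieldType) (n : nat) (theta : R) :
  (2 <= n)%N -> ((2 < n)%N -> theta < n%:R / (n%:R - 2)) ->
  0 < 2 * n%:R * theta + n%:R ^+ 2 - n%:R ^+ 2 * theta.
Proof.
move=> n_ge2 theta_lt.
have -> : 2 * n%:R * theta + n%:R ^+ 2 - n%:R ^+ 2 * theta
          = n%:R * (2 * theta + n%:R - n%:R * theta) :> R by ring.
rewrite pmulr_rgt0 ?ltr0n ?(leq_trans _ n_ge2) //.
case: (ltnP 2 n) => [n_gt2 | n_le2].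
  have N_gt2 : 2 < n%:R :> R by rewrite (ltr_nat R 2 n).
  by move: (theta_lt n_gt2); rewrite ltr_pdivlMr; lra.
have -> : n = 2%N by apply/eqP; rewrite eqn_leq n_le2 n_ge2.
lra.
Qed.

Theorem lemma4p5 (R : realFieldType) (n : nat) (l alpha theta mu : R) :
  (2 <= n)%N ->
  0 < l -> l < 2 / n%:R ->
  2 / n%:R <= alpha -> alpha < 1 + 1 / n%:R - l / 2 ->
  1 < theta -> ((2 < n)%N -> theta < n%:R / (n%:R - 2)) ->
  n%:R / 2 < mu ->
  l * (2 * mu - 1) / (4 * mu - n%:R) <
    (n%:R * (theta + 1 - 2 * alpha * theta) + 2 * theta) /
    (2 * n%:R * theta + n%:R ^+ 2 - n%:R ^+ 2 * theta) ->
  exists qr : R, 1 <= qr /\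
    forall q : R, qr < q ->
      - (2 * l * (n%:R * q + mu * (4 + n%:R ^+ 2 - 2 * n%:R * (2 + q))))
        / (n%:R * (4 * mu - n%:R))
      < (q * (2 * n%:R * (theta + 1 - 2 * alpha * theta) + 4 * theta)
         + 2 * n%:R * theta * (alpha - 1) * (n%:R - 2))
        / (2 * n%:R * theta + n%:R ^+ 2 - n%:R ^+ 2 * theta).
Proof.
move=> n_ge2 _ _ _ _ _ theta_lt mu_gt slope_lt.
have D_gt0 := @theta_denom_gt0 R n theta n_ge2 theta_lt.
have N_gt0 : 0 < n%:R :> R by rewrite ltr0n (leq_trans _ n_ge2).
have M_gt0 : 0 < 4 * mu - n%:R by move: mu_gt; rewrite ltr_pdivrMr //; lra.
have slope2_lt : 2 * (l * (2 * mu - 1) / (4 * mu - n%:R)) <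
    2 * ((n%:R * (theta + 1 - 2 * alpha * theta) + 2 * theta) /
    (2 * n%:R * theta + n%:R ^+ 2 - n%:R ^+ 2 * theta)) by rewrite ltr_pM2l.
have [qr [qr_ge1 qr_large]] := @affine_lt_eventually R _ _
  (- (2 * l * mu * (n%:R - 2) ^+ 2 / (n%:R * (4 * mu - n%:R))))
  (2 * n%:R * theta * (alpha - 1) * (n%:R - 2)
     / (2 * n%:R * theta + n%:R ^+ 2 - n%:R ^+ 2 * theta)) slope2_lt.
exists qr; split=> // q /qr_large.
by congr (_ < _); field; rewrite ?gt_eqF ?mulr_gt0.
Qed.
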